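(* Let $G$ be an undirected chordal graph with terminals $s,t$, and let $G'$ be the graph obtained from $G$ by deleting every vertex and every edge that lies on no $s$-$t$ path. Let $T^*$ be the set of vertices $x$ of $G'$ for which there exists an edge $(a,b)\in E(G')$ with $x\in N_{G'}(a)\cap N_{G'}(b)$ such that $G'-x$ contains an $s$-$t$ path using the edge $(a,b)$. Then $T^*$ is a minimum-cardinality tracking set for $G$.
   Context: Graphs are simple. A chordal graph is a graph in which every cycle of length greater than three has a chord. An $s$-$t$ path is a simple path from $s$ to $t$. A set $T\subseteq V(G)$ is a tracking set if for any two distinct $s$-$t$ paths $P_1,P_2$, the sequence of vertices of $T\cap V(P_1)$ in the order encountered along $P_1$ differs from the sequence of vertices of $T\cap V(P_2)$ in the order encountered along $P_2$. $N_{H}(v)$ denotes the neighbourhood of $v$ in $H$; $H-x$ denotes the graph with vertex $x$ deleted. *)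

(* Simple graphs: symmetric irreflexive relation e on a finType. *)
From mathcomp Require Import all_boot.
Set Implicit Arguments. Unset Strict Implicit. Unset Printing Implicit Defensive.

Section Graphs.
Variable T : finType.

Definition stpath_in (R : T -> T -> Prop) (V : T -> Prop) (s t : T)
  (p : seq T) : Prop :=
  [/\ 0 < size p, nth s p 0 = s, last s p = t, uniq p &
      (forall x, x \in p -> V x) /\
      (forall i, i.+1 < size p -> R (nth s p i) (nth s p i.+1))].

Definition stpath (e : rel T) (s t : T) (p : seq T) : Prop :=
  stpath_in (fun a b => e a b) (fun _ => True) s t p.

Definition uses_edge (p : seq T) (a b : T) : Prop :=
  exists i, i.+1 < size p /\
    ((nth a p i = a /\ nth a p i.+1 = b) \/ (nth a p i = b /\ nth a p i.+1 = a)).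

Definition chordal (e : rel T) : Prop :=
  forall c : seq T, uniq c -> 3 < size c -> cycle e c ->
    exists x0 : T, exists i j : nat,
      [/\ i < j, j < size c, e (nth x0 c i) (nth x0 c j),
          j != i.+1 & ~~ ((i == 0) && (j == (size c).-1))].

Definition Gp_vert (e : rel T) (s t : T) (x : T) : Prop :=
  exists p, stpath e s t p /\ x \in p.
Definition Gp_edge (e : rel T) (s t : T) (a b : T) : Prop :=
  e a b /\ exists p, stpath e s t p /\ uses_edge p a b.

Definition Tstar_mem (e : rel T) (s t : T) (x : T) : Prop :=
  Gp_vert e s t x /\
  exists a b : T,
    [/\ Gp_edge e s t a b, Gp_edge e s t a x, Gp_edge e s t b x &
        exists p, stpath_in (Gp_edge e s t) (fun y => Gp_vert e s t y /\ y <> x) s t p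
                  /\ uses_edge p a b].

Definition tracking_set (e : rel T) (s t : T) (S : {set T}) : Prop :=
  forall p1 p2 : seq T, stpath e s t p1 -> stpath e s t p2 -> p1 <> p2 ->
    [seq x <- p1 | x \in S] <> [seq x <- p2 | x \in S].

Definition min_tracking_set (e : rel T) (s t : T) (S : {set T}) : Prop :=
  tracking_set e s t S /\ forall S' : {set T}, tracking_set e s t S' -> #|S| <= #|S'|.

End Graphs.

From mathcomp Require Import all_boot.
From mathcomp Require Import zify.
Set Implicit Arguments. Unset Strict Implicit. Unset Printing Implicit Defensive.

(* In a chordal graph, if ab is an edge and a b-path ends at a neighbour of a
   not on it, some vertex of that path is a common neighbour of a and b (take
   chords of the cycle it closes until a triangle remains).
   Let two distinct s-t paths share a prefix ending at u and continue to
   v1 <> v2.  If v1 is not on the second path, closing the cycle u v1 .. t ..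
   v2 u gives a common neighbour z of u and v1 on it, and the path through the
   edge uz avoids v1: so v1 is in T*.  Hence one of v1, v2, say v1, is in T*.
   For a superset S of T*, equal traces would force the second path to reach
   v1 only after a nonempty segment free of S; but that segment contains a
   common neighbour of u and v1, again a vertex of T*.  Conversely, a vertex x
   of T* can be inserted between a and b into an x-avoiding s-t path, so a set
   missing x cannot tell the two paths apart. *)

Section SeqFacts.
Variable T : eqType.

Lemma uniq_branch (w : T) p1 p2 : p1 != p2 -> uniq (w :: p1) -> uniq (w :: p2) ->
  last w p1 = last w p2 -> exists A u v1 v2 r1 r2,
  [/\ w :: p1 = A ++ u :: v1 :: r1, w :: p2 = A ++ u :: v2 :: r2 & v1 != v2].
Proof.
elim: p1 w p2 => [|y1 q1 IH] w [|y2 q2] //.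
- by move=> _ _ /= /andP[+ _] lw; rewrite lw mem_last.
- by move=> _ /= /andP[+ _] _ lw; rewrite -lw mem_last.
move=> ne /= /andP[_ u1] /andP[_ u2] lw; case: (eqVneq y1 y2) => [eq12|n12].
  subst y2; have ne' : q1 != q2 by apply: contra ne => /eqP ->.
  have [A [u [v1 [v2 [r1 [r2 [h1 h2 hv]]]]]]] := IH y1 q2 ne' u1 u2 lw.
  by exists (w :: A), u, v1, v2, r1, r2; rewrite /= h1 h2.
by exists [::], w, y1, y2, q1, q2.
Qed.

Lemma uniq_shortcut_notin (A r1 r2 : seq T) u z x :
  uniq (A ++ u :: r1 ++ z :: r2) -> x \in r1 -> x \notin A ++ u :: z :: r2.
Proof.
rewrite -(cat_rcons u A) -(cat_rcons u A (z :: r2)) uniq_catCA cat_uniq.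
by case/and3P=> _ /hasPn dis _ xr1; apply: contraL (dis x) xr1.
Qed.

Lemma uniq_cat_notin (A r : seq T) x : uniq (A ++ x :: r) -> x \notin A ++ r.
Proof. by rewrite -cat1s uniq_catCA cat1s cons_uniq => /andP[]. Qed.

Lemma filter_cat_cons_hasN (a : pred T) Y v Z l : v \notin Y ->
  [seq x <- Y ++ v :: Z | a x] = v :: l -> ~~ has a Y.
Proof.
rewrite has_filter negbK filter_cat => vY.
case E: [seq x <- Y | a x] => [//|y F] [yv _].
have : y \in [seq x <- Y | a x] by rewrite E mem_head.
by rewrite mem_filter yv (negbTE vY) andbF.
Qed.

Lemma last_rev_belast (c : T) r : last (last c r) (rev (belast c r)) = c.
Proof. by case: r => [|y r] //=; rewrite rev_cons last_rcons. Qed.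

End SeqFacts.

Section ChordalTracking.
Variables (T : finType) (e : rel T).
Hypotheses (e_sym : symmetric e) (e_chordal : chordal e).

Lemma chordal_chord c : uniq c -> 3 < size c -> cycle e c ->
  exists c1 x c2 y c3, [/\ c = c1 ++ x :: c2 ++ y :: c3, e x y, c2 != [::] &
                          (c1 != [::]) || (c3 != [::])].
Proof.
move=> uc sc cc; have [x0 [i [j [lij ljs exy nj ni]]]] := e_chordal uc sc cc.
have lis : i < size c by apply: ltn_trans ljs.
have ij1 : i.+1 < j by rewrite ltn_neqAle eq_sym nj lij.
exists (take i c), (nth x0 c i), (take (j - i.+1) (drop i.+1 c)), (nth x0 c j),
  (drop j.+1 c); split => //.
- rewrite -{1}(cat_take_drop i c) (drop_nth x0 lis); congr (_ ++ _ :: _).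
  rewrite -{1}(cat_take_drop (j - i.+1) (drop i.+1 c)) drop_drop subnK ?(ltnW ij1) //.
  by rewrite (drop_nth x0 ljs).
- rewrite -size_eq0 size_take size_drop; case: ifP => _; rewrite -lt0n subn_gt0 //.
  exact: ltn_trans ljs.
- rewrite -!size_eq0 size_take size_drop lis; case: (posnP i) => [i0|//] /=.
  by move: ni ljs; rewrite i0 /=; case: (size c) => // n /eqP ni ljs; apply/eqP; lia.
Qed.

Lemma path_shortcut b P L x M y R : b :: P = L ++ x :: M ++ y :: R -> e x y ->
  M != [::] -> path e b P ->
  exists2 q, subseq q P & [/\ size q < size P, 0 < size q, path e b q &
                              last b q = last b P].
Proof.
case: L => [|b' L] /= [-> ->] exy M0.
  rewrite cat_path /= => /and3P[_ _ pR]; exists (y :: R); first exact: suffix_subseq.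
  by rewrite /= exy last_cat; split => //; case: M M0 => // m M _; rewrite size_cat /=; lia.
rewrite cat_path /= => /and3P[pL eLx]; rewrite cat_path /= => /and3P[_ _ pR].
exists (L ++ x :: y :: R); first by rewrite subseq_cat2l /= eqxx suffix_subseq.
rewrite !size_cat !last_cat /= size_cat last_cat /= cat_path /= pL eLx exy pR.
by split => //; case: M M0 => // m M _ /=; lia.
Qed.

Lemma chordal_path_shorter a b p : uniq (a :: b :: p) -> e a b -> path e b p ->
  e a (last b p) -> 1 < size p ->
  exists2 q, {subset q <= p} &
    [/\ uniq (a :: b :: q), path e b q, e a (last b q), 0 < size q & size q < size p].
Proof.
move=> up eab pp eal p1.
(* A chord at a leads to a shorter path; any other chord shortcuts p. *)
have cc : cycle e [:: a, b & p].
  by rewrite /= rcons_path eab pp -(e_sym a) eal.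
have [[|a' c1] [x [c2 [y [c3 [hc exy c20 c13]]]]]] := chordal_chord up p1 cc.
  case: hc exy => <-; case: c2 c20 => [//|b' c2] _ [_ hp] eay.
  have {}hp : p = rcons c2 y ++ c3 by rewrite hp cat_rcons.
  have sub : subseq (rcons c2 y) p by rewrite hp prefix_subseq.
  exists (rcons c2 y); first exact: mem_subseq sub.
  rewrite last_rcons size_rcons; split => //.
  - by apply: subseq_uniq up; rewrite /= !eqxx.
  - by move: pp; rewrite hp cat_path => /andP[].
  - by rewrite hp size_cat size_rcons -[X in X < _]addn0 ltn_add2l lt0n size_eq0.
case: hc => _ hP; have [q sub [sq q0 pq lq]] := path_shortcut hP exy c20 pp.
exists q; first exact: mem_subseq sub.
by rewrite lq; split => //; apply: subseq_uniq up; rewrite /= !eqxx.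
Qed.

Lemma chordal_common_neighbour_uniq a b p : uniq (a :: b :: p) -> e a b ->
  path e b p -> e a (last b p) -> 0 < size p -> exists2 z, z \in p & e a z && e b z.
Proof.
elim: {p}_.+1 {-2}p (ltnSn (size p)) => // n IH p szp up eab pp eal p0.
have [p1|] := ltnP 1 (size p).
  have [q sub [uq pq eq q0 sq]] := chordal_path_shorter up eab pp eal p1.
  have [|z zq Hz] := IH q _ uq eab pq eq q0; first exact: leq_trans sq szp.
  by exists z => //; apply: sub.
case: p p0 pp eal {szp up} => [//|x [|//]] _ /= /andP[ebx _] eax _.
by exists x; rewrite ?mem_head ?eax.
Qed.

Lemma chordal_common_neighbour a b p : e a b -> path e b p -> e a (last b p) ->
  last b p != b -> a \notin b :: p -> exists2 z, z \in p & e a z && e b z.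
Proof.
move=> eab pp; case: (shortenP pp) => q pq uq sub eal lb anp.
have uq' : uniq (a :: b :: q).
  rewrite cons_uniq uq andbT; apply: contra anp.
  by rewrite !inE => /orP[->|/sub ->]; rewrite ?orbT.
have q0 : 0 < size q by case: q lb {pq uq sub eal uq'} => //=; rewrite eqxx.
have [z zq Hz] := chordal_common_neighbour_uniq uq' eab pq eal q0.
by exists z => //; apply: sub.
Qed.

Lemma stpath_inE (R : T -> T -> Prop) V s t p :
  stpath_in R V s t p <->
  [/\ 0 < size p, head s p = s, last s p = t, uniq p &
      (forall x, x \in p -> V x) /\
      (forall i, i.+1 < size p -> R (nth s p i) (nth s p i.+1))].
Proof. by rewrite /stpath_in nth0. Qed.

Lemma uses_edge_cat (L : seq T) a b R : uses_edge (L ++ a :: b :: R) a b.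
Proof.
exists (size L); split; first by rewrite size_cat /=; lia.
by left; rewrite !nth_cat ltnn subnn ltnNge leqnSn /= subSn // subnn.
Qed.

Lemma uses_edge_catC (L : seq T) a b R : uses_edge (L ++ a :: b :: R) b a.
Proof.
exists (size L); split; first by rewrite size_cat /=; lia.
by right; rewrite !nth_cat ltnn subnn ltnNge leqnSn /= subSn // subnn.
Qed.

Lemma uses_edge_nth (p : seq T) i x0 : i.+1 < size p ->
  uses_edge p (nth x0 p i) (nth x0 p i.+1).
Proof.
move=> lt; exists i; split => //; left.
by split; apply: set_nth_default => //; apply: ltnW.
Qed.

Lemma uses_edgeP (p : seq T) a b : uses_edge p a b ->
  exists L R, p = L ++ a :: b :: R \/ p = L ++ b :: a :: R.
Proof.
case=> i [lt h]; exists (take i p), (drop i.+2 p).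
have hp : p = take i p ++ nth a p i :: nth a p i.+1 :: drop i.+2 p.
  by rewrite -(drop_nth a lt) -(drop_nth a (ltnW lt)) cat_take_drop.
by case: h => [[h1 h2]|[h1 h2]]; [left|right]; rewrite {1}hp h1 h2.
Qed.

Variables s t : T.

Definition spath p := [/\ 0 < size p, head s p = s, last s p = t, uniq p & sorted e p].

Lemma stpathE p : stpath e s t p <-> spath p.
Proof.
split; first by case/stpath_inE=> h1 h2 h3 h4 [_ /(sortedP s) h5].
by case=> h1 h2 h3 h4 /(sortedP s) h5; apply/stpath_inE.
Qed.

Lemma spath_edge A u v r : spath (A ++ u :: v :: r) -> e u v.
Proof. by case=> _ _ _ _; rewrite sorted_cat_cons /= => /and3P[]. Qed.

Lemma spath_shortcut A u r1 z r2 : spath (A ++ u :: r1 ++ z :: r2) -> e u z ->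
  spath (A ++ u :: z :: r2).
Proof.
case=> _ h1 h2 h3 h4 euz; split.
- by rewrite size_cat /= addnS.
- by move: h1; case: (A).
- by move: h2; rewrite !last_cat /= last_cat.
- by apply: subseq_uniq h3; rewrite subseq_cat2l /= eqxx suffix_subseq.
- move: h4; rewrite !sorted_cat_cons => /andP[-> /=]; rewrite cat_path /= euz.
  by case/and3P.
Qed.

Lemma spath_insert L a b R x : spath (L ++ a :: b :: R) ->
  x \notin L ++ a :: b :: R -> e a x -> e x b -> spath (L ++ a :: x :: b :: R).
Proof.
case=> _ h1 h2 h3 h4 xn eax exb; split.
- by rewrite size_cat /= addnS.
- by move: h1; case: (L).
- by move: h2; rewrite !last_cat.
- by rewrite -cat_rcons -cat1s uniq_catCA cat1s cons_uniq cat_rcons xn.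
- by move: h4; rewrite !sorted_cat_cons /= eax exb => /and3P[-> _ ->].
Qed.

Lemma Tstar_mem_bypass L a b R x : spath (L ++ a :: b :: R) ->
  x \notin L ++ a :: b :: R -> e a x -> e b x -> Tstar_mem e s t x.
Proof.
move=> hQ xn eax ebx; have eab := spath_edge hQ.
have /stpathE hQx := spath_insert hQ xn eax (etrans (e_sym _ _) ebx).
set Q := L ++ a :: b :: R in hQ xn; set Qx := L ++ a :: x :: b :: R in hQx.
have Gp_edge_Q c d : e c d -> uses_edge Q c d -> Gp_edge e s t c d.
  by move=> ecd uQ; split=> //; exists Q; split=> //; apply/stpathE.
have Gp_edge_Qx c d : e c d -> uses_edge Qx c d -> Gp_edge e s t c d.
  by move=> ecd uQ; split=> //; exists Qx.
split; first by exists Qx; rewrite mem_cat !inE eqxx !orbT.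
exists a, b; split.
- exact: Gp_edge_Q (uses_edge_cat _ _ _ _).
- exact: Gp_edge_Qx (uses_edge_cat _ _ _ _).
- by apply: Gp_edge_Qx ebx _; rewrite /Qx -[a :: _]cat1s catA; apply: uses_edge_catC.
exists Q; split; last exact: uses_edge_cat.
case: hQ => h0 h1 h2 h3 /(sortedP s) h4; apply/stpath_inE; split=> //; split.
  move=> y yQ; split; first by exists Q; split=> //; apply/stpathE.
  by move=> yx; rewrite -yx yQ in xn.
by move=> i lt; apply: Gp_edge_Q (h4 i lt) (uses_edge_nth _ lt).
Qed.

(* W walks from b along the first path to t and back along the second to c. *)
Lemma spath_tails_walk A u b rb c rc :
  spath (A ++ u :: b :: rb) -> spath (A ++ u :: c :: rc) ->
  let W := rb ++ rev (belast c rc) in [/\ path e b W, last b W = c & u \notin b :: W].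
Proof.
case=> _ _ l1 u1 s1 [_ _ l2 u2 s2] W.
have lt : last b rb = last c rc by move: l1 l2; rewrite !last_cat /= => -> ->.
split.
- move: s1 s2; rewrite !sorted_cat_cons /= cat_path lt => /and3P[_ _ ->] /and3P[_ _].
  by rewrite rev_path (@eq_path _ _ e) // => x y; rewrite /= e_sym.
- by rewrite last_cat lt last_rev_belast.
rewrite -cat_cons mem_cat mem_rev negb_or; apply/andP; split.
  by apply: contra (uniq_cat_notin u1); rewrite mem_cat => ->; rewrite orbT.
by apply: contra (uniq_cat_notin u2) => /mem_belast; rewrite mem_cat => ->; rewrite orbT.
Qed.

Lemma Tstar_mem_branch A u b rb c rc :
  spath (A ++ u :: b :: rb) -> spath (A ++ u :: c :: rc) ->
  b \notin A ++ u :: c :: rc -> Tstar_mem e s t b.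
Proof.
move=> h1 h2 bn; have eub := spath_edge h1; have [pW lW uW] := spath_tails_walk h1 h2.
have cb : c != b by apply: contraNneq bn => ->; rewrite mem_cat !inE eqxx !orbT.
have [||z] := chordal_common_neighbour eub pW _ _ uW; rewrite ?lW //.
  exact: spath_edge h2.
rewrite mem_cat => /orP[zrb | zc] /andP[euz ebz]; rewrite e_sym in ebz.
  case/splitPr: zrb h1 => r1 r2 h1.
  apply: Tstar_mem_bypass (spath_shortcut (r1 := b :: r1) h1 euz) _ eub ebz.
  by apply: (@uniq_shortcut_notin _ _ (b :: r1)) (mem_head _ _); case: h1.
move: zc h2 bn; rewrite mem_rev => /mem_belast /splitPr[r1 r2] h2 bn.
apply: Tstar_mem_bypass (spath_shortcut h2 euz) _ eub ebz.
by apply: contra bn; apply: mem_subseq; rewrite subseq_cat2l /= eqxx suffix_subseq.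
Qed.

Lemma Tstar_mem_branch_vertex A u v1 r1 v2 r2 :
  spath (A ++ u :: v1 :: r1) -> spath (A ++ u :: v2 :: r2) -> v1 != v2 ->
  Tstar_mem e s t v1 \/ Tstar_mem e s t v2.
Proof.
move=> h1 h2 n12.
have [v2in|v2n] := boolP (v2 \in A ++ u :: v1 :: r1); last first.
  by right; apply: Tstar_mem_branch h2 h1 v2n.
left; have v2r1 : v2 \in r1.
  have : v2 \notin rcons A u ++ r2 by apply: uniq_cat_notin; rewrite cat_rcons; case: h2.
  move: v2in; rewrite -cat_rcons !mem_cat inE eq_sym (negbTE n12) /=.
  by case: (v2 \in rcons A u).
case/splitPr: v2r1 h1 => r1a r1b h1.
apply: (Tstar_mem_branch h1 (spath_shortcut (r1 := v1 :: r1a) h1 (spath_edge h2))).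
by apply: (@uniq_shortcut_notin _ _ (v1 :: r1a)) (mem_head _ _); case: h1.
Qed.

Lemma trace_branch_neq (S : {set T}) (TS : forall x, Tstar_mem e s t x -> x \in S)
    A u v1 r1 v2 r2 :
  spath (A ++ u :: v1 :: r1) -> spath (A ++ u :: v2 :: r2) -> v1 != v2 -> v1 \in S ->
  [seq x <- A ++ u :: v1 :: r1 | x \in S] <> [seq x <- A ++ u :: v2 :: r2 | x \in S].
Proof.
move=> h1 h2 n12 v1S.
rewrite -[A ++ _ :: v1 :: _]cat_rcons -[A ++ _ :: v2 :: _]cat_rcons !filter_cat => /eqP.
rewrite eqseq_cat // eqxx => /eqP eqf.
have [Y [Z hYZ]] : exists Y Z, v2 :: r2 = Y ++ v1 :: Z.
  have : v1 \in [seq x <- v2 :: r2 | x \in S] by rewrite -eqf /= v1S mem_head.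
  by rewrite mem_filter => /andP[_ /splitPr[Y Z]]; exists Y, Z.
have Y0 : Y != [::] by case: Y hYZ => // [[v21]]; rewrite v21 eqxx in n12.
rewrite hYZ in h2 eqf; have euv1 := spath_edge h1.
have [_ _ _ u2 /[!sorted_cat_cons] /andP[_ pY]] := h2.
move: pY; rewrite cat_path /= => /and3P[pY eYv1 _].
have v1Y : v1 \notin u :: Y.
  have := @uniq_cat_notin _ (A ++ u :: Y) Z v1; rewrite -catA => /(_ u2).
  by apply: contra; rewrite !mem_cat => ->; rewrite !orbT.
have lY : last u Y != u.
  apply: contraNneq (uniq_cat_notin u2) => <-; rewrite !mem_cat.
  by case: (Y) Y0 => //= y Y' _; rewrite mem_last orbT.
have [z zY /andP[ev1z euz]] :=
  chordal_common_neighbour (etrans (e_sym _ _) euv1) pY (etrans (e_sym _ _) eYv1) lY v1Y.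
have /TS zS : Tstar_mem e s t z.
  apply: (Tstar_mem_bypass (spath_shortcut h2 euv1)) euz ev1z.
  exact: uniq_shortcut_notin u2 zY.
have v1nY : v1 \notin Y by move: v1Y; rewrite inE negb_or => /andP[].
rewrite /= v1S in eqf; have /hasPn YnS := filter_cat_cons_hasN v1nY (esym eqf).
by move/negP: (YnS z zY).
Qed.

Lemma spath_branch p1 p2 : spath p1 -> spath p2 -> p1 <> p2 ->
  exists A u v1 v2 r1 r2,
    [/\ p1 = A ++ u :: v1 :: r1, p2 = A ++ u :: v2 :: r2 & v1 != v2].
Proof.
case: p1 p2 => [|w1 q1] [|w2 q2] [//= _ E1 l1 u1 _] [//= _ E2 l2 u2 _] ne.
subst w1 w2; apply: uniq_branch => //; last by rewrite l1 l2.
by apply: contraPneq ne => ->.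
Qed.

Lemma Tstar_superset_tracking (S : {set T}) :
  (forall x, Tstar_mem e s t x -> x \in S) -> tracking_set e s t S.
Proof.
move=> TS p1 p2 /stpathE h1 /stpathE h2 ne.
have [A [u [v1 [v2 [r1 [r2 [E1 E2 n12]]]]]]] := spath_branch h1 h2 ne.
subst p1 p2; have [/TS v1S | /TS v2S] := Tstar_mem_branch_vertex h1 h2 n12.
  exact: (trace_branch_neq TS h1 h2 n12 v1S).
by apply: nesym; apply: (trace_branch_neq TS h2 h1 _ v2S); rewrite eq_sym.
Qed.

Lemma tracking_set_Tstar (S : {set T}) x :
  tracking_set e s t S -> Tstar_mem e s t x -> x \in S.
Proof.
move=> HS [_ [a [b [_ [eax _] [ebx _] [p [/stpath_inE hp up]]]]]].
have [//|xn] := boolP (x \in S); exfalso.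
have [xp sp] : x \notin p /\ spath p.
  case: hp => h0 h1 h2 h3 [hv h4]; split; first by apply/negP => /hv[].
  by split=> //; apply/(sortedP s) => i /h4[].
have detour c d L R : e c x -> e d x -> p = L ++ c :: d :: R -> False.
  move=> ecx edx pE; rewrite pE in sp xp.
  have sp' := spath_insert sp xp ecx (etrans (e_sym _ _) edx).
  apply: (HS _ _ (proj2 (stpathE _) sp) (proj2 (stpathE _) sp')).
    by move/(congr1 size); rewrite !size_cat /=; lia.
  by rewrite !filter_cat /= (negbTE xn).
have [L [R [pE|pE]]] := uses_edgeP up; [exact: detour eax ebx pE | exact: detour ebx eax pE].
Qed.

End ChordalTracking.

Theorem mainTheorem2 (T : finType) (e : rel T) (s t : T)
  (e_sym : symmetric e) (e_irr : irreflexive e) (e_chordal : chordal e)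
  (Tstar : {set T}) (HTstar : forall x, x \in Tstar <-> Tstar_mem e s t x) :
  min_tracking_set e s t Tstar.
Proof.
split; first by apply: (Tstar_superset_tracking e_sym e_chordal) => x /HTstar.
move=> S HS; apply/subset_leq_card/subsetP => x /HTstar.
exact: (tracking_set_Tstar e_sym HS).
Qed.
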